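(* Let $G$ and $H$ be graphs and let $f,f'\colon \varGamma(H)\to \varGamma(G)$ be properad morphisms such that the image of $f$ and the image of $f'$ are both subgraphs of $G$. If $f_0=f'_0$ as functions $\mathrm{Ed}(H)\to \mathrm{Ed}(G)$, then $f=f'$. That is, a properad map $\varGamma(H)\to\varGamma(G)$ whose image is a subgraph of $G$ is uniquely determined by its effect on edges.
   Context: A graph is a finite connected directed graph, allowed to have legs (edges attached to a vertex at only one end; the graph $\downarrow$ consisting of a single edge and no vertex is allowed), with no directed cycles, together with orderings (bijections with $\{1,\dots,k\}$) of its global inputs $\mathrm{in}(G)$ and outputs $\mathrm{out}(G)$ and of the inputs $\mathrm{in}(v)$ and outputs $\mathrm{out}(v)$ of each vertex $v\in\mathrm{Vt}(G)$; $\mathrm{Ed}(G)$ denotes its set of edges. Graph substitution $K\{L_v\}_{v}$ replaces each vertex $v$ of $K$ by a graph $L_v$ whose inputs and outputs are identified bijectively (and compatibly with colorings) with $\mathrm{in}(v)$ and $\mathrm{out}(v)$. For a graph $G$, the properad $\varGamma(G)$ has color set $\mathrm{Ed}(G)$, and its operations of biprofile $(\underline c;\underline d)$ are $\hat G$-decorated graphs: graphs $K$ with inputs $\underline c$ and outputs $\underline d$ whose edges are colored by edges of $G$, together with a function $\mathrm{Vt}(K)\to\mathrm{Vt}(G)$ compatible with the colorings; composition is graph substitution. A properad morphism $f\colon\varGamma(H)\to\varGamma(G)$ consists of a function $f_0\colon \mathrm{Ed}(H)\to\mathrm{Ed}(G)$ and an assignment $f_1$ sending each $v\in\mathrm{Vt}(H)$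 to a $\hat G$-decorated graph with inputs $f_0(\mathrm{in}(v))$ and outputs $f_0(\mathrm{out}(v))$. The image of $f$ is the $\hat G$-decorated graph $f_0H\{f_1(v)\}_{v\in\mathrm{Vt}(H)}$, obtained by relabeling the edges of $H$ via $f_0$ and substituting $f_1(v)$ at each vertex $v$; saying the image is a subgraph of $G$ means that via its decorations this graph is identified with a subgraph of $G$. *)

From mathcomp Require Import all_boot.


(* An edge e goes
   from [psrc e] to [ptgt e]; [psrc e = None] means e is a global input
   (it has no initial vertex), [ptgt e = None] means e is a global output.
   Thus e \in in(v) iff ptgt e = Some v, and e \in out(v) iff psrc e = Some v.
   The lists [pin], [pout], [pvin v], [pvout v] are the orderings of
   in(G), out(G), in(v), out(v).                                            *)
Record pregraph := PreGraph {
  pV : finType;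
  pE : finType;
  psrc : pE -> option pV;
  ptgt : pE -> option pV;
  pin : seq pE;
  pout : seq pE;
  pvin : pV -> seq pE;
  pvout : pV -> seq pE }.

Arguments psrc {p} _.
Arguments ptgt {p} _.
Arguments pvin p _ : assert.
Arguments pvout p _ : assert.

Definition incid (P : pregraph) : rel (pV P + pE P)%type :=
  fun x y =>
    match x, y with
    | inl v, inr e => (psrc e == Some v) || (ptgt e == Some v)
    | inr e, inl v => (psrc e == Some v) || (ptgt e == Some v)
    | _, _ => false
    end.

Definition vrel (P : pregraph) : rel (pV P) :=
  fun u w => [exists e : pE P, (psrc e == Some u) && (ptgt e == Some w)].

Definition is_graph (P : pregraph) : Prop :=
  perm_eq (pin P) [seq e <- enum (pE P) | psrc e == None] /\
  perm_eq (pout P) [seq e <- enum (pE P) | ptgt e == None] /\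
  (forall v, perm_eq (pvin P v) [seq e <- enum (pE P) | ptgt e == Some v]) /\
  (forall v, perm_eq (pvout P v) [seq e <- enum (pE P) | psrc e == Some v]) /\
  0 < #|{: (pV P + pE P)%type}| /\
  (forall x y : (pV P + pE P)%type, connect (@incid P) x y) /\
  (forall u w : pV P, vrel P u w -> ~~ connect (@vrel P) w u).

Record decorated (G : pregraph) := Decorated {
  dgr : pregraph;
  dE : pE dgr -> pE G;
  dV : pV dgr -> pV G }.

Arguments dgr {G} _.
Arguments dE {G} _ _.
Arguments dV {G} _ _.

Definition is_decorated (G : pregraph) (D : decorated G) : Prop :=
  is_graph (dgr D) /\
  forall w : pV (dgr D),
    perm_eq (map (dE D) (pvin (dgr D) w)) (pvin G (dV D w)) /\
    perm_eq (map (dE D) (pvout (dgr D) w)) (pvout G (dV D w)).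

(* Equality of operations of Gamma(G): isomorphism of decorated graphs,
   preserving the global orderings of inputs/outputs, the incidence
   structure, and the decorations. *)
Definition dec_iso (G : pregraph) (D D' : decorated G) : Prop :=
  exists (phiV : pV (dgr D) -> pV (dgr D')) (phiE : pE (dgr D) -> pE (dgr D')),
    bijective phiV /\ bijective phiE /\
    (forall e, psrc (phiE e) = omap phiV (psrc e)) /\
    (forall e, ptgt (phiE e) = omap phiV (ptgt e)) /\
    map phiE (pin (dgr D)) = pin (dgr D') /\
    map phiE (pout (dgr D)) = pout (dgr D') /\
    (forall e, dE D' (phiE e) = dE D e) /\
    (forall w, dV D' (phiV w) = dV D w).

Record prop_morph (H G : pregraph) := PropMorph {
  f0 : pE H -> pE G;
  f1 : pV H -> decorated G }.

Arguments f0 {H G} _ _.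
Arguments f1 {H G} _ _.

Definition is_prop_morph (H G : pregraph) (f : prop_morph H G) : Prop :=
  forall v : pV H,
    is_decorated G (f1 f v) /\
    map (dE (f1 f v)) (pin (dgr (f1 f v))) = map (f0 f) (pvin H v) /\
    map (dE (f1 f v)) (pout (dgr (f1 f v))) = map (f0 f) (pvout H v).

(* Edges: all edges of H together with all edges of all f1 v, where the
   i-th input (output) of f1 v is glued to the i-th input (output) of v in
   H; the edges of the image are the equivalence classes of the gluing.   *)
Section Image.
Variables (H G : pregraph) (f : prop_morph H G).

Let L (v : pV H) := dgr (f1 f v).

Definition imX := (pE H + {v : pV H & pE (L v)})%type.

Definition glue1 : rel imX := fun x y =>
  match x, y with
  | inr t, inl h =>
      ((tagged t, h) \in zip (pin (L (tag t))) (pvin H (tag t))) ||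
      ((tagged t, h) \in zip (pout (L (tag t))) (pvout H (tag t)))
  | _, _ => false
  end.

Definition glue : rel imX := fun x y => glue1 x y || glue1 y x.

Lemma glue_sym : symmetric glue.
Proof. by move=> x y; rewrite /glue orbC. Qed.

Lemma glue_connect_sym : connect_sym glue.
Proof. exact: sym_connect_sym glue_sym. Qed.

Definition imE := {x : imX | root glue x == x}.

Definition imcl (x : imX) : imE :=
  exist _ (root glue x) (introT eqP (root_root glue_connect_sym x)).

Definition imV := {v : pV H & pV (L v)}.

Definition srcX (x : imX) : option imV :=
  match x with
  | inl _ => None
  | inr t => omap (fun w => Tagged (fun v => pV (L v)) w) (psrc (tagged t))
  end.

Definition tgtX (x : imX) : option imV :=
  match x with
  | inl _ => None
  | inr t => omap (fun w => Tagged (fun v => pV (L v)) w) (ptgt (tagged t))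
  end.

Definition colX (x : imX) : pE G :=
  match x with
  | inl h => f0 f h
  | inr t => dE (f1 f (tag t)) (tagged t)
  end.

Definition im_src (c : imE) : option imV :=
  if [pick x | (root glue x == val c) && (srcX x != None)] is Some x
  then srcX x else None.

Definition im_tgt (c : imE) : option imV :=
  if [pick x | (root glue x == val c) && (tgtX x != None)] is Some x
  then tgtX x else None.

Definition im_graph : pregraph :=
  @PreGraph imV imE im_src im_tgt
    [seq imcl (inl h) | h <- pin H]
    [seq imcl (inl h) | h <- pout H]
    (fun w => [seq imcl (inr (Tagged (fun v => pE (L v)) e)) | e <- pvin (L (tag w)) (tagged w)])
    (fun w => [seq imcl (inr (Tagged (fun v => pE (L v)) e)) | e <- pvout (L (tag w)) (tagged w)]).

Definition morph_image : decorated G :=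
  @Decorated G im_graph (fun c : imE => colX (val c))
    (fun w : imV => dV (f1 f (tag w)) (tagged w)).

End Image.

(* A decorated graph D is (via its decorations) identified with a subgraph
   of G: D is a graph, its decorations are injective on edges and vertices,
   compatible with the colorings, the incidence structure of D is the one
   induced from G, and the set of vertices is convex in G (every directed
   path of G between two vertices of D stays inside D), which is exactly
   the condition that G is obtained by substituting D into a vertex of a
   (acyclic) graph, with corollas at the other vertices.                  *)
Definition is_subgraph (G : pregraph) (D : decorated G) : Prop :=
  is_decorated G D /\
  injective (dE D) /\
  injective (dV D) /\
  (forall e w, psrc e = Some w <-> psrc (dE D e) = Some (dV D w)) /\
  (forall e w, ptgt e = Some w <-> ptgt (dE D e) = Some (dV D w)) /\
  (forall (u w : pV (dgr D)) (x : pV G),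
     connect (vrel G) (dV D u) x -> connect (vrel G) x (dV D w) ->
     exists y, dV D y = x).

Arguments morph_image {H G} f.
Arguments is_prop_morph {H G} f.
Arguments dec_iso {G} D D'.
Arguments is_subgraph {G} D.

From mathcomp Require Import all_boot.

Set Implicit Arguments.
Unset Strict Implicit.
Unset Printing Implicit Defensive.

(* First, each f1 v embeds in G.  Colours are constant on the classes of
   the gluing that builds the image, so two edges of f1 v with the same
   colour in G are glued, hence joined by a chain that leaves v through an
   output and re-enters it through an input; this is a directed cycle of H.
   Vertices are handled directly by injectivity of the image on vertices.
   Second, an embedded decorated graph D is recovered from its boundary
   f0(in v), f0(out v): detaching each input edge of D from its source and
   each output edge from its target, the footprint of D in G becomes a
   connected component.  The footprints of f1 v and f1' v meet (in a
   boundary edge, or anywhere when the boundary is empty, since G is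
   connected), so they coincide, and matching the two embeddings along the
   common footprint is the required isomorphism. *)

Lemma perm_filter_enum_mem (T : finType) (p : pred T) (s : seq T) :
  perm_eq s [seq x <- enum T | p x] -> forall x, (x \in s) = p x.
Proof. by move=> /perm_mem eq_s x; rewrite eq_s mem_filter mem_enum andbT. Qed.

Lemma perm_filter_enum_uniq (T : finType) (p : pred T) (s : seq T) :
  perm_eq s [seq x <- enum T | p x] -> uniq s.
Proof. by move=> /perm_uniq ->; rewrite filter_uniq ?enum_uniq. Qed.

Section GraphFacts.

Variable P : pregraph.
Hypothesis graphP : is_graph P.

Lemma mem_pin e : (e \in pin P) = (psrc e == None).
Proof. exact: perm_filter_enum_mem graphP.1 e. Qed.

Lemma mem_pout e : (e \in pout P) = (ptgt e == None).
Proof. exact: perm_filter_enum_mem graphP.2.1 e. Qed.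

Lemma mem_pvin v e : (e \in pvin P v) = (ptgt e == Some v).
Proof. exact: perm_filter_enum_mem (graphP.2.2.1 v) e. Qed.

Lemma mem_pvout v e : (e \in pvout P v) = (psrc e == Some v).
Proof. exact: perm_filter_enum_mem (graphP.2.2.2.1 v) e. Qed.

Lemma uniq_pin : uniq (pin P).
Proof. exact: perm_filter_enum_uniq graphP.1. Qed.

Lemma uniq_pout : uniq (pout P).
Proof. exact: perm_filter_enum_uniq graphP.2.1. Qed.

Lemma uniq_pvin v : uniq (pvin P v).
Proof. exact: perm_filter_enum_uniq (graphP.2.2.1 v). Qed.

Lemma uniq_pvout v : uniq (pvout P v).
Proof. exact: perm_filter_enum_uniq (graphP.2.2.2.1 v). Qed.

Lemma card_graph_gt0 : 0 < #|{: pV P + pE P}|.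
Proof. exact: graphP.2.2.2.2.1. Qed.

Lemma connect_incid x y : connect (incid P) x y.
Proof. exact: graphP.2.2.2.2.2.1. Qed.

Lemma vrel_acyclic u w : vrel P u w -> ~~ connect (vrel P) w u.
Proof. exact: graphP.2.2.2.2.2.2. Qed.

End GraphFacts.

Lemma connect_stable (T : finType) (e : rel T) (P : T -> Prop) :
  (forall x y, e x y -> P x -> P y) -> forall x y, connect e x y -> P x -> P y.
Proof.
move=> stableP x y /connectP[p]; elim: p x => [|z p IHp] x /=; first by move=> _ ->.
by case/andP=> exz pz ey Px; apply: IHp pz ey (stableP _ _ exz Px).
Qed.

Lemma connect_first_step (T : finType) (e : rel T) x y :
  connect e x y -> x != y -> exists2 z, e x z & connect e z y.
Proof.
case/connectP=> [[|z p]] /=; first by move=> _ ->; rewrite eqxx.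
by case/andP=> exz pz -> _; exists z => //; apply/connectP; exists p.
Qed.

Lemma connect_functional_step (T : finType) (e : rel T) x y z :
  (forall a b b', e a b -> e a b' -> b = b') ->
  e z x -> connect e z y -> connect e x y \/ connect e y x.
Proof.
move=> fun_e ezx czy; have [eq_zy|neq_zy] := eqVneq z y.
  by right; rewrite -eq_zy connect1.
have [z1 ezz1 cz1y] := connect_first_step czy neq_zy.
by left; rewrite (fun_e _ _ _ ezx ezz1).
Qed.

Lemma connect_sym_closure (T : finType) (e : rel T) :
  (forall a b b', e a b -> e a b' -> b = b') ->
  (forall a a' b, e a b -> e a' b -> a = a') ->
  forall x y, connect [rel a b | e a b || e b a] x y -> connect e x y \/ connect e y x.
Proof.
move=> fun_e inj_e x y /connectP[p]; elim: p x => [|z p IHp] x /=.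
  by move=> _ ->; left.
case/andP=> exz pz ey; have [czy|cyz] := IHp z pz ey; case/orP: exz => exz.
- by left; apply: connect_trans (connect1 exz) czy.
- exact: connect_functional_step czy.
- have fun_rev a b b' : e b a -> e b' a -> b = b' by move=> eba eb'a; exact: inj_e eba eb'a.
  have cyz_rev : connect [rel a b | e b a] z y by rewrite connect_rev.
  by case: (connect_functional_step fun_rev exz cyz_rev); rewrite connect_rev /=; [right|left].
- by right; apply: connect_trans cyz (connect1 exz).
Qed.

Lemma mem_zip (S T : eqType) (s : seq S) (t : seq T) a b :
  (a, b) \in zip s t -> (a \in s) /\ (b \in t).
Proof.
elim: s t => [|x s IHs] [|y t] //=; rewrite in_cons.
by case/orP=> [/eqP[-> ->]|/IHs[sa tb]]; rewrite !in_cons ?eqxx ?sa ?tb ?orbT.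
Qed.

Lemma mem_zip_swap (S T : eqType) (s : seq S) (t : seq T) a b :
  ((a, b) \in zip s t) = ((b, a) \in zip t s).
Proof. by elim: s t => [|x s IHs] [|y t] //=; rewrite !in_cons IHs !xpair_eqE andbC. Qed.

Lemma zip_uniql_fun (S T : eqType) (s : seq S) (t : seq T) a b b' :
  uniq s -> (a, b) \in zip s t -> (a, b') \in zip s t -> b = b'.
Proof.
elim: s t => [|x s IHs] [|y t] //= /andP[xs us]; rewrite !in_cons.
case/orP=> [/eqP[ea ->]|ab]; case/orP=> [/eqP[ea' ->]|ab'] //.
- by move: xs; rewrite -ea (mem_zip ab').1.
- by move: xs; rewrite -ea' (mem_zip ab).1.
- exact: IHs ab ab'.
Qed.

Lemma zip_uniqr_fun (S T : eqType) (s : seq S) (t : seq T) a a' b :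
  uniq t -> (a, b) \in zip s t -> (a', b) \in zip s t -> a = a'.
Proof. by rewrite !(mem_zip_swap s); apply: zip_uniql_fun. Qed.

Lemma eq_map_zip (A B C : eqType) (g : A -> C) (g' : B -> C) s s' a b :
  map g s = map g' s' -> (a, b) \in zip s s' -> g a = g' b.
Proof.
elim: s s' => [|x s IHs] [|y s'] //= [gxy gss']; rewrite in_cons.
by case/orP=> [/eqP[-> ->] // | /(IHs _ gss')].
Qed.

Lemma bij_of_eq_codom (A B : finType) (C : eqType) (f : A -> C) (g : B -> C) :
  injective f -> injective g -> codom f =i codom g ->
  exists2 phi : A -> B, bijective phi & forall a, g (phi a) = f a.
Proof.
move=> inj_f inj_g eq_fg.
have fg a : f a \in codom g by rewrite -eq_fg codom_f.
have gf b : g b \in codom f by rewrite eq_fg codom_f.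
exists (fun a => iinv (fg a)); last by move=> a; rewrite f_iinv.
by exists (fun b => iinv (gf b)) => [a|b]; [apply: inj_f | apply: inj_g]; rewrite !f_iinv.
Qed.

Lemma eq_omap_bij (A B : eqType) (phi : A -> B) (x : option A) (y : option B) :
  bijective phi -> (forall a, (x == Some a) = (y == Some (phi a))) -> y = omap phi x.
Proof.
case=> psi phiK psiK; case: x => [a|] eq_xy /=; first by apply/eqP; rewrite -eq_xy.
by case: y eq_xy => // b /(_ (psi b)); rewrite psiK eqxx.
Qed.

Definition boundary_in (G : pregraph) (D : decorated G) := map (dE D) (pin (dgr D)).
Definition boundary_out (G : pregraph) (D : decorated G) := map (dE D) (pout (dgr D)).

Definition footprint (G : pregraph) (D : decorated G) : pred (pV G + pE G) :=
  fun x => match x with inl z => z \in codom (dV D) | inr e => e \in codom (dE D) end.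

Definition dlift (G : pregraph) (D : decorated G) (a : pV (dgr D) + pE (dgr D)) :
    pV G + pE G :=
  match a with inl w => inl (dV D w) | inr t => inr (dE D t) end.

Arguments dlift {G} D a.

Definition cut_incid (G : pregraph) (Bi Bo : seq (pE G)) : rel (pV G + pE G) :=
  fun x y => incid G x y && ~~
    match x, y with
    | inl z, inr e | inr e, inl z =>
        (e \in Bi) && (psrc e == Some z) || (e \in Bo) && (ptgt e == Some z)
    | _, _ => false
    end.

Lemma footprint_dlift G (D : decorated G) a : footprint D (dlift D a).
Proof. by case: a => [w|t]; apply: codom_f. Qed.

Lemma footprintP G (D : decorated G) x : footprint D x -> exists a, x = dlift D a.
Proof. by case: x => [z|e] /codomP[a ->]; [exists (inl a) | exists (inr a)]. Qed.

Lemma footprint_boundary G (D : decorated G) e :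
  e \in boundary_in D ++ boundary_out D -> footprint D (inr e).
Proof. by rewrite mem_cat => /orP[] /mapP[t _ ->]; apply: codom_f. Qed.

Section Footprint.

Variables (G : pregraph) (D : decorated G).
Hypotheses (graphG : is_graph G) (decD : is_decorated G D) (injD : injective (dE D)).

Lemma psrc_dE t w : (psrc t == Some w) = (psrc (dE D t) == Some (dV D w)).
Proof.
by rewrite -(mem_pvout decD.1) -(mem_pvout graphG) -(perm_mem (decD.2 w).2) mem_map.
Qed.

Lemma ptgt_dE t w : (ptgt t == Some w) = (ptgt (dE D t) == Some (dV D w)).
Proof.
by rewrite -(mem_pvin decD.1) -(mem_pvin graphG) -(perm_mem (decD.2 w).1) mem_map.
Qed.

Let cutD := cut_incid (boundary_in D) (boundary_out D).

Lemma cut_incid_dlift a b : incid (dgr D) a b -> cutD (dlift D a) (dlift D b).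
Proof.
rewrite /cutD /cut_incid /boundary_in /boundary_out.
case: a b => [w|t] [w'|t'] //= inc_ab;
  rewrite !mem_map // -!psrc_dE -!ptgt_dE (mem_pin decD.1) (mem_pout decD.1) inc_ab /=;
  move: inc_ab.
  by case: (psrc t') => [?|]; case: (ptgt t') => [?|].
by case: (psrc t) => [?|]; case: (ptgt t) => [?|].
Qed.

Lemma footprint_cut_closed x y : cutD x y -> footprint D x -> footprint D y.
Proof.
case: x y => [z|e] [z'|e'] //= /andP[inc_xy].
- move=> _ /codomP[w eq_z]; apply/codomP; move: inc_xy; rewrite eq_z /=.
  rewrite -(mem_pvout graphG) -(mem_pvin graphG).
  rewrite -(perm_mem (decD.2 w).2) -(perm_mem (decD.2 w).1).
  by case/orP=> /mapP[t _ ->]; exists t.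
- move=> not_cut /codomP[t eq_e]; apply/codomP; rewrite eq_e /= in inc_xy not_cut.
  rewrite !mem_map // (mem_pin decD.1) (mem_pout decD.1) in not_cut.
  case/orP: inc_xy => [src_e|tgt_e].
    case src_t: (psrc t) => [w|]; last by rewrite src_t src_e in not_cut.
    by move/eqP: src_t; rewrite psrc_dE (eqP src_e) => /eqP[->]; exists w.
  case tgt_t: (ptgt t) => [w|]; last by rewrite tgt_t tgt_e orbT in not_cut.
  by move/eqP: tgt_t; rewrite ptgt_dE (eqP tgt_e) => /eqP[->]; exists w.
Qed.

Lemma footprint_connected x y : footprint D x -> footprint D y -> connect cutD x y.
Proof.
move=> /footprintP[a ->] /footprintP[b ->].
apply: (connect_stable (P := fun c => connect cutD (dlift D a) (dlift D c)))
  (connect_incid decD.1 a b) (connect0 _ _) => c c' /cut_incid_dlift/connect1 cc' ac.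
exact: connect_trans ac cc'.
Qed.

End Footprint.

Lemma footprint_sub (G : pregraph) (D D' : decorated G) c :
  is_graph G -> is_decorated G D -> is_decorated G D' ->
  injective (dE D) -> injective (dE D') ->
  boundary_in D = boundary_in D' -> boundary_out D = boundary_out D' ->
  footprint D c -> footprint D' c -> {subset footprint D <= footprint D'}.
Proof.
move=> graphG decD decD' injED injED' inD outD Dc D'c y Dy.
have := footprint_connected graphG decD injED Dc Dy; rewrite inD outD => cy.
exact: connect_stable (footprint_cut_closed graphG decD' injED') _ _ cy D'c.
Qed.

Section BoundaryDeterminesEmbedding.

Variables (G : pregraph) (D D' : decorated G).
Hypotheses (graphG : is_graph G) (decD : is_decorated G D) (decD' : is_decorated G D').
Hypotheses (injED : injective (dE D)) (injED' : injective (dE D')).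
Hypotheses (inD : boundary_in D = boundary_in D') (outD : boundary_out D = boundary_out D').

Lemma footprint_meet : exists c, footprint D c && footprint D' c.
Proof.
case bnd: (boundary_in D ++ boundary_out D) => [|e s].
  have [inD0 outD0] : boundary_in D = [::] /\ boundary_out D = [::].
    by case: (boundary_in D) (boundary_out D) bnd => [|? ?] [|? ?].
  case/card_gt0P: (card_graph_gt0 decD.1) => a _.
  case/card_gt0P: (card_graph_gt0 decD'.1) => a' _.
  exists (dlift D' a'); rewrite footprint_dlift andbT.
  have uncut : cut_incid (boundary_in D) (boundary_out D) =2 incid G.
    by rewrite inD0 outD0 /cut_incid => - [?|?] [?|?] /=; rewrite ?andbT.
  apply: (connect_stable (footprint_cut_closed graphG decD injED) _ (footprint_dlift a)).
  by rewrite (eq_connect uncut) connect_incid.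
have be : e \in boundary_in D ++ boundary_out D by rewrite bnd mem_head.
by exists (inr e); rewrite !footprint_boundary // -inD -outD.
Qed.

Lemma eq_footprint : footprint D =i footprint D'.
Proof.
have [c /andP[Dc D'c]] := footprint_meet.
move=> y; apply/idP/idP.
  exact: (footprint_sub graphG decD decD' injED injED' inD outD Dc D'c).
exact: (footprint_sub graphG decD' decD injED' injED (esym inD) (esym outD) D'c Dc).
Qed.

Hypotheses (injVD : injective (dV D)) (injVD' : injective (dV D')).

Lemma dec_iso_of_boundary : dec_iso D D'.
Proof.
have [phiV bijV phiVE] := bij_of_eq_codom injVD injVD' (fun z => eq_footprint (inl z)).
have [phiE bijE phiEE] := bij_of_eq_codom injED injED' (fun e => eq_footprint (inr e)).
have phiE_boundary s : map (dE D') (map phiE s) = map (dE D) s.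
  by rewrite -map_comp (eq_map phiEE).
exists phiV, phiE; split=> //; split=> //; split; [|split; [|split; [|split]]].
- move=> t; apply: eq_omap_bij => // w.
  by rewrite (psrc_dE graphG decD' injED') phiEE phiVE -(psrc_dE graphG decD injED).
- move=> t; apply: eq_omap_bij => // w.
  by rewrite (ptgt_dE graphG decD' injED') phiEE phiVE -(ptgt_dE graphG decD injED).
- by apply: (inj_map injED'); rewrite phiE_boundary.
- by apply: (inj_map injED'); rewrite phiE_boundary.
- by [].
Qed.

End BoundaryDeterminesEmbedding.

Section ImageEmbedding.

Variables (H G : pregraph) (f : prop_morph H G).
Hypotheses (graphH : is_graph H) (morph_f : is_prop_morph f).

Local Notation L v := (dgr (f1 f v)).
Local Notation X := (imX H G f).

Definition flow : rel X := fun x y =>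
  match x, y with
  | inr t, inl h => (tagged t, h) \in zip (pout (L (tag t))) (pvout H (tag t))
  | inl h, inr t => (tagged t, h) \in zip (pin (L (tag t))) (pvin H (tag t))
  | _, _ => false
  end.

Lemma glue_flow x y : glue H G f x y = flow x y || flow y x.
Proof. by case: x y => [h|t] [h'|t'] //=; rewrite /glue /= ?orbF // orbC. Qed.

Lemma flow_functional x y y' : flow x y -> flow x y' -> y = y'.
Proof.
case: x y y' => [h|[u a]] [h'|[u' a']] [h''|[u'' a'']] //= xy xy'.
  move: (mem_zip xy).2 (mem_zip xy').2; rewrite !(mem_pvin graphH) => /eqP-> /eqP[eq_u].
  by subst u''; rewrite (zip_uniqr_fun (uniq_pvin graphH u') xy xy').
by rewrite (zip_uniql_fun (uniq_pout (morph_f u).1.1) xy xy').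
Qed.

Lemma flow_injective x x' y : flow x y -> flow x' y -> x = x'.
Proof.
case: x x' y => [h|[u a]] [h'|[u' a']] [h''|[u'' a'']] //= xy x'y.
  by rewrite (zip_uniql_fun (uniq_pin (morph_f u'').1.1) xy x'y).
move: (mem_zip xy).2 (mem_zip x'y).2; rewrite !(mem_pvout graphH) => /eqP-> /eqP[eq_u].
by subst u'; rewrite (zip_uniqr_fun (uniq_pvout graphH u) xy x'y).
Qed.

Definition downstream (v : pV H) (x : X) : Prop :=
  match x with
  | inl h => exists2 u, psrc h = Some u & connect (vrel H) v u
  | inr t => exists2 u, connect (vrel H) v u & vrel H u (tag t)
  end.

Lemma downstream_flow v x y : flow x y -> downstream v x -> downstream v y.
Proof.
case: x y => [h|[u a]] [h'|[u' a']] //= xy.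
  case=> w src_h vw; exists w => //; apply/existsP; exists h.
  by rewrite src_h -(mem_pvin graphH) (mem_zip xy).2 eqxx.
case=> w vw wu; exists u; first by apply/eqP; rewrite -(mem_pvout graphH) (mem_zip xy).2.
exact: connect_trans vw (connect1 wu).
Qed.

Lemma flow_out_downstream v a x : flow (inr (existT _ v a)) x -> downstream v x.
Proof.
case: x => [h|//] /= /mem_zip[_ out_h]; exists v => //.
by apply/eqP; rewrite -(mem_pvout graphH).
Qed.

Lemma flow_connect_same_vertex v a b :
  connect flow (inr (existT _ v a)) (inr (existT _ v b)) -> a = b.
Proof.
move=> cab; have [[/eqP]|neq_ab] := eqVneq (inr (existT _ v a) : X) (inr (existT _ v b)).
  by rewrite eq_Tagged => /eqP.
have [x /flow_out_downstream ax cxb] := connect_first_step cab neq_ab.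
have [u vu uv] := connect_stable (@downstream_flow v) cxb ax.
by move: (vrel_acyclic graphH uv); rewrite vu.
Qed.

Lemma glue_connect_same_vertex v a b :
  connect (glue H G f) (inr (existT _ v a)) (inr (existT _ v b)) -> a = b.
Proof.
rewrite (eq_connect glue_flow).
by case/(connect_sym_closure flow_functional flow_injective)=> /flow_connect_same_vertex.
Qed.

Lemma colX_flow x y : flow x y -> colX H G f x = colX H G f y.
Proof.
case: x y => [h|[u a]] [h'|[u' a']] //= xy.
  by rewrite (eq_map_zip (morph_f u').2.1 xy).
by rewrite (eq_map_zip (morph_f u).2.2 xy).
Qed.

Lemma colX_glue_connect x y : connect (glue H G f) x y -> colX H G f x = colX H G f y.
Proof.
move=> cxy; apply: (connect_stable (P := fun z => colX H G f x = colX H G f z)) cxy _ => //.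
by move=> y' z; rewrite glue_flow => /orP[] /colX_flow ->.
Qed.

Hypothesis sub_f : is_subgraph (morph_image f).

Lemma injective_dE_f1 v : injective (dE (f1 f v)).
Proof.
move=> a b eq_ab; apply: glue_connect_same_vertex.
rewrite -root_connect; last exact: glue_connect_sym.
suff: imcl H G f (inr (existT _ v a)) = imcl H G f (inr (existT _ v b)) by move=> [->].
apply: sub_f.2.1 => /=.
rewrite -(colX_glue_connect (connect_root _ (inr (existT _ v a)))).
by rewrite -(colX_glue_connect (connect_root _ (inr (existT _ v b)))).
Qed.

Lemma injective_dV_f1 v : injective (dV (f1 f v)).
Proof.
move=> a b /(sub_f.2.2.1 (existT _ v a) (existT _ v b)) /eqP.
by rewrite eq_Tagged => /eqP.
Qed.

End ImageEmbedding.

Theorem mainTheorem2 (G H : pregraph) (f f' : prop_morph H G) :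
  is_graph G -> is_graph H ->
  is_prop_morph f -> is_prop_morph f' ->
  is_subgraph (morph_image f) -> is_subgraph (morph_image f') ->
  (forall e : pE H, f0 f e = f0 f' e) ->
  (forall e : pE H, f0 f e = f0 f' e) /\
  (forall v : pV H, dec_iso (f1 f v) (f1 f' v)).
Proof.
move=> graphG graphH morph_f morph_f' sub_f sub_f' eq_f0; split=> // v.
have [dec_v [in_v out_v]] := morph_f v; have [dec'_v [in'_v out'_v]] := morph_f' v.
apply: (dec_iso_of_boundary graphG dec_v dec'_v).
- exact: injective_dE_f1 graphH morph_f sub_f v.
- exact: injective_dE_f1 graphH morph_f' sub_f' v.
- by rewrite /boundary_in in_v in'_v (eq_map eq_f0).
- by rewrite /boundary_out out_v out'_v (eq_map eq_f0).
- exact: injective_dV_f1 sub_f v.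
- exact: injective_dV_f1 sub_f' v.
Qed.
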